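(* Let $(X_t)_{t\ge0}$ be a real process and $r\in\mathbb R$, and for $0<\varepsilon\le1$ set $X_1^\varepsilon:=X_{\varepsilon^2}$. Assume $S_t:=e^{-rt}\exp(X_t)$ is a martingale and that there exist $p>1$ and $t>0$ with $E[S_t^p]<\infty$. Then $\limsup_{\varepsilon\to0}E[\exp(pX_1^\varepsilon)]<\infty$. *)

From HB Require Import structures.
From mathcomp Require Import all_boot all_order all_algebra.
From mathcomp Require Import all_classical all_reals all_analysis.
Set Implicit Arguments. Unset Strict Implicit. Unset Printing Implicit Defensive.
Import Order.TTheory GRing.Theory Num.Theory.
Import numFieldNormedType.Exports.
Local Open Scope classical_set_scope.
Local Open Scope ring_scope.

Definition filtration (R : realType) (d : measure_display) (T : measurableType d)
  (F : R -> set (set T)) : Prop :=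
  (forall t, 0 <= t -> sigma_algebra setT (F t) /\ F t `<=` measurable) /\
  (forall s t, 0 <= s -> s <= t -> F s `<=` F t).

(* Martingale w.r.t. the filtration F under P (conditional expectations are not
   in the library; we use the standard defining property
   E[M_t 1_A] = E[M_s 1_A] for all A in F_s, s <= t). *)
Definition martingale (R : realType) (d : measure_display) (T : measurableType d)
  (P : probability T R) (F : R -> set (set T)) (M : R -> T -> R) : Prop :=
  [/\ (forall t, 0 <= t -> forall B : set R, measurable B -> F t (M t @^-1` B)),
      (forall t, 0 <= t -> P.-integrable setT (EFin \o M t)) &
      (forall s t, 0 <= s -> s <= t -> forall A, F s A ->
         (\int[P]_(x in A) (M t x)%:E = \int[P]_(x in A) (M s x)%:E)%E)].

From HB Require Import structures.
From mathcomp Require Import all_boot all_order all_algebra.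
From mathcomp Require Import all_classical all_reals all_analysis.
From mathcomp Require Import lra ring.
Import Order.TTheory GRing.Theory Num.Theory.
Import numFieldNormedType.Exports.
Local Open Scope classical_set_scope.
Local Open Scope ring_scope.
Import measurable_realfun.

(* For s <= t the martingale property gives E[S_t; S_s >= c] = E[S_s; S_s >= c]
   for every level c, and this alone bounds the p-th moment of Y := S_s by that
   of Z := S_t.  For the truncation N := min(floor Y, M), the power N^(p-1) is a
   nonnegative combination of indicators of level sets of Y, so
     E[N^p] <= E[Y N^(p-1)] = E[Z N^(p-1)] <= E[N^p]/2 + 2^(p-1) E[Z^p]
   by Young's inequality; as E[N^p] is finite this gives E[N^p] <= 2^p E[Z^p],
   and monotone convergence in M bounds E[S_s^p] uniformly in s <= t.  Finally
   E[exp(p X_(eps^2))] = exp(p r eps^2) E[S_(eps^2)^p] stays bounded as eps -> 0. *)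

Section Staircase.
Context {R : realType}.
Implicit Types (y : R) (M : nat).

Lemma indic_itvcy (c y : R) : \1_`[c, +oo[ y = (c <= y)%R%:R :> R.
Proof. by rewrite indicE mem_setE in_itv /= andbT. Qed.

(* For [y >= 0], [staircase M y = min (floor y) M].  Its powers are nonnegative
   combinations of indicators of [`[k, +oo[] (staircase_powR), so integrals
   against them only see level sets. *)
Definition staircase M y : R := \sum_(k < M) \1_`[k.+1%:R, +oo[ y.

Lemma staircase0 y : staircase 0 y = 0.
Proof. by rewrite /staircase big_ord0. Qed.

Lemma staircaseS M y : staircase M.+1 y = staircase M y + \1_`[M.+1%:R, +oo[ y.
Proof. by rewrite /staircase big_ord_recr. Qed.

Lemma staircase_ge0 M y : 0 <= staircase M y.
Proof. exact: sumr_ge0. Qed.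

Lemma staircase_le_nat M y : staircase M y <= M%:R.
Proof.
rewrite -[M in M%:R]card_ord -sumr_const.
by apply: ler_sum => k _; rewrite indicE; case: (_ \in _).
Qed.

Lemma staircase_nat M y : M%:R <= y -> staircase M y = M%:R.
Proof.
move=> My; rewrite /staircase (eq_bigr (fun=> 1)) ?sumr_const ?card_ord// => k _.
by rewrite indic_itvcy (le_trans _ My) // ler_nat.
Qed.

Lemma staircase_le M y : 0 <= y -> staircase M y <= y.
Proof.
move=> y0; elim: M => [|M IH]; first by rewrite staircase0.
have [My|yM] := leP M.+1%:R y; first by rewrite staircase_nat.
by rewrite staircaseS indic_itvcy (lt_geF yM) addr0.
Qed.

Lemma min_le_staircaseD1 M y : Num.min y M%:R <= staircase M y + 1.
Proof.
elim: M => [|M IH]; first by rewrite staircase0 add0r ge_min ler01 orbT.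
have [My|yM] := leP M.+1%:R y; first by rewrite (staircase_nat _ _ My) lerDl.
rewrite staircaseS indic_itvcy (lt_geF yM) addr0.
have [yM'|My] := leP y M%:R; first by rewrite (min_l yM') in IH.
by rewrite staircase_nat ?(ltW My) // natr1 ltW.
Qed.

Lemma staircase_powR q M y : 0 < q ->
  staircase M y `^ q =
  \sum_(k < M) (k.+1%:R `^ q - k%:R `^ q) * \1_`[k.+1%:R, +oo[ y.
Proof.
move=> q0; elim: M => [|M IH]; first by rewrite staircase0 big_ord0 powR0 // gt_eqF.
rewrite big_ord_recr /= -IH.
have [My|yM] := leP M.+1%:R y.
  rewrite indic_itvcy My !staircase_nat ?mulr1 1?addrC ?subrK //.
  by rewrite (le_trans _ My) ?ler_nat.
by rewrite staircaseS indic_itvcy (lt_geF yM) addr0 mulr0 addr0.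
Qed.

Lemma measurable_staircase M : measurable_fun setT (staircase M).
Proof. by apply: measurable_sum => k; exact: measurable_indic. Qed.

End Staircase.

Section PowerInequalities.
Context {R : realType}.

Lemma mul_powRB1_le (n z p : R) : 0 <= n -> 0 <= z -> 1 < p ->
  z * n `^ (p - 1) <= 2^-1 * n `^ p + 2 `^ (p - 1) * z `^ p.
Proof.
move=> n0 z0 p1; have p0 : 0 < p by lra.
have [zn|nz] := leP (2 * z) n.
  apply: ler_wpDr; first by rewrite mulr_ge0 ?powR_ge0.
  rewrite -(mulr_powRB1 n0 p0) mulrA ler_wpM2r ?powR_ge0 //; lra.
apply: ler_wpDl; first by rewrite mulr_ge0 ?invr_ge0 ?powR_ge0.
rewrite -(mulr_powRB1 z0 p0) mulrCA ler_wpM2l // -powRM //.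
by apply: ge0_ler_powR; rewrite ?nnegrE; lra.
Qed.

Lemma powR_le_mul2D1 (m n p : R) : 0 <= p -> 0 <= m -> 0 <= n -> m <= n + 1 ->
  m `^ p <= 2 `^ p * (n `^ p + 1).
Proof.
move=> p0 m0 n0 mn; have [n1|n1] := leP 1 n.
  apply: (@le_trans _ _ ((2 * n) `^ p)).
    by apply: ge0_ler_powR; rewrite ?nnegrE; lra.
  by rewrite powRM // ler_wpM2l ?powR_ge0 // lerDl.
apply: (@le_trans _ _ (2 `^ p)).
  by apply: ge0_ler_powR; rewrite ?nnegrE; lra.
by rewrite ler_peMr ?powR_ge0 // lerDr powR_ge0.
Qed.

End PowerInequalities.

Section Integrals.
Context {d} {T : measurableType d} {R : realType}.
Variable mu : {measure set T -> \bar R}.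
Local Open Scope ereal_scope.

Lemma integral_mul_indic_comp (W Y : T -> R) (A : set R) :
  \int[mu]_x (W x * \1_A (Y x))%:E = \int[mu]_(x in Y @^-1` A) (W x)%:E.
Proof.
rewrite [RHS]integral_mkcond; apply: eq_integral => x _.
rewrite /patch indicE (_ : (x \in Y @^-1` A) = (Y x \in A)) ?inE //.
by case: (_ \in _); rewrite ?mulr1 ?mulr0.
Qed.

Lemma integral_mul_staircase_powR (W Y : T -> R) (q : R) (M : nat) :
  (0 < q)%R ->
  measurable_fun setT W -> measurable_fun setT Y -> (forall x, 0 <= W x)%R ->
  \int[mu]_x (W x * staircase M (Y x) `^ q)%:E =
  \sum_(k < M) (k.+1%:R `^ q - k%:R `^ q)%:E *
    \int[mu]_(x in Y @^-1` `[k.+1%:R, +oo[) (W x)%:E.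
Proof.
move=> q0 mW mY W0.
have a0 k : (0 <= k.+1%:R `^ q - k%:R `^ q :> R)%R.
  by rewrite subr_ge0 ge0_ler_powR ?nnegrE ?ler_nat // ltW.
have mI (c : R) : measurable_fun setT (fun x => \1_`[c, +oo[ (Y x) : R).
  by apply: measurableT_comp mY; exact: measurable_indic.
under eq_integral do rewrite staircase_powR // mulr_sumr -sumEFin.
rewrite ge0_integral_sum //; last first.
- by move=> k x _; rewrite lee_fin mulr_ge0 // mulr_ge0 // indicE.
- move=> k; apply/measurable_EFinP/measurable_funM => //.
  exact/measurable_funM.
apply: eq_bigr => k _.
rewrite -(integral_mul_indic_comp W) -ge0_integralZl ?lee_fin //; last 2 first.
- exact/measurable_EFinP/measurable_funM.
- by move=> x _; rewrite lee_fin mulr_ge0 // indicE.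
by apply: eq_integral => x _; rewrite -EFinM mulrCA.
Qed.

Lemma integral_mul_powRB1_le (N Z : T -> R) (p : R) : (1 < p)%R ->
  measurable_fun setT N -> measurable_fun setT Z ->
  (forall x, 0 <= N x)%R -> (forall x, 0 <= Z x)%R ->
  \int[mu]_x (Z x * N x `^ (p - 1))%:E <=
  (2^-1)%:E * \int[mu]_x (N x `^ p)%:E +
  (2 `^ (p - 1))%:E * \int[mu]_x (Z x `^ p)%:E.
Proof.
move=> p1 mN mZ N0 Z0.
have mNp := measurableT_comp (measurable_powR p) mN.
have mZp := measurableT_comp (measurable_powR p) mZ.
rewrite -!ge0_integralZl ?lee_fin ?invr_ge0 ?powR_ge0 //;
  try by [exact/measurable_EFinP | move=> x _; rewrite lee_fin powR_ge0].
rewrite -ge0_integralD //; try by [exact/measurable_EFinP/measurable_funM |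
  move=> x _; rewrite -EFinM lee_fin mulr_ge0 ?invr_ge0 ?powR_ge0].
apply: ge0_le_integral => //.
- by move=> x _; rewrite lee_fin mulr_ge0 ?powR_ge0.
- apply/measurable_EFinP/measurable_funM => //.
  exact: measurableT_comp (measurable_powR _) mN.
- by apply: emeasurable_funD; apply/measurable_EFinP/measurable_funM.
- by move=> x _; rewrite -!EFinM -EFinD lee_fin mul_powRB1_le.
Qed.

Lemma integral_powR_le_of_min (Y : T -> R) (p : R) (C : \bar R) : (0 <= p)%R ->
  measurable_fun setT Y -> (forall x, 0 <= Y x)%R ->
  (forall M : nat, \int[mu]_x (Num.min (Y x) M%:R `^ p)%:E <= C) ->
  \int[mu]_x (Y x `^ p)%:E <= C.
Proof.
move=> p0 mY Y0 bound.
pose G M x := (Num.min (Y x) M%:R `^ p)%:E.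
have mG M : measurable_fun setT (G M).
  apply/measurable_EFinP/(measurableT_comp (measurable_powR p)).
  exact: measurable_minr mY (measurable_cst _).
have G0 M x : 0 <= G M x by rewrite lee_fin powR_ge0.
have G_nd x : {homo G ^~ x : n m / (n <= m)%N >-> n <= m}.
  move=> n m nm; rewrite lee_fin.
  have min_nd : (Num.min (Y x) n%:R <= Num.min (Y x) m%:R)%R.
    by apply: le_min2; rewrite ?ler_nat.
  by apply: ge0_ler_powR min_nd; rewrite // nnegrE le_min Y0 ler0n.
have -> : \int[mu]_x (Y x `^ p)%:E = \int[mu]_x limn (G ^~ x).
  apply: eq_integral => x _; apply/esym/lim_near_cst => //.
  near=> M; rewrite /G min_l // ltW // (lt_le_trans (truncnS_gt (Y x))) // ler_nat.
  by near: M; exists (Num.truncn (Y x)).+1.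
rewrite monotone_convergence //; apply: lime_le; last exact: nearW.
apply: ereal_nondecreasing_is_cvgn => m n mn.
by apply: ge0_le_integral => // x _; exact: G_nd.
Unshelve. all: by end_near. Qed.

End Integrals.

Section LevelSetDomination.
Context {d} {T : measurableType d} {R : realType} (P : probability T R).
Variables (Y Z : T -> R) (p z : R).
Hypotheses (p1 : 1 < p) (mY : measurable_fun setT Y) (mZ : measurable_fun setT Z).
Hypotheses (Y0 : forall x, 0 <= Y x) (Z0 : forall x, 0 <= Z x).
Hypothesis level_eq : forall c : R,
  (\int[P]_(x in Y @^-1` `[c, +oo[) (Z x)%:E =
   \int[P]_(x in Y @^-1` `[c, +oo[) (Y x)%:E)%E.
Hypothesis Zp : (\int[P]_x (Z x `^ p)%:E = z%:E)%E.

Let p_gt0 : 0 < p. Proof. exact: lt_trans ltr01 p1. Qed.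

Lemma integral_mul_staircase_level M :
  (\int[P]_x (Y x * staircase M (Y x) `^ (p - 1))%:E =
   \int[P]_x (Z x * staircase M (Y x) `^ (p - 1))%:E)%E.
Proof.
rewrite !integral_mul_staircase_powR ?subr_gt0 //.
by apply: eq_bigr => k _; rewrite level_eq.
Qed.

Lemma staircase_moment_le M :
  (\int[P]_x (staircase M (Y x) `^ p)%:E <= (2 `^ p * z)%:E)%E.
Proof.
pose N x := staircase M (Y x).
have mN : measurable_fun setT N := measurableT_comp (measurable_staircase M) mY.
have N0 x : 0 <= N x := staircase_ge0 _ _.
have mNp := measurableT_comp (measurable_powR p) mN.
set J := (\int[P]_x (N x `^ p)%:E)%E.
(* Truncating at [M] makes [J] finite, so that [J <= J/2 + c] can be solved for [J]. *)
have Jfin : J \is a fin_num.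
  rewrite ge0_fin_numE ?integral_ge0 // => [|x _]; last by rewrite lee_fin powR_ge0.
  apply: (@le_lt_trans _ _ (\int[P]_x (M%:R `^ p)%:E)%E); last first.
    by rewrite integral_cst //= probability_setT mule1 ltry.
  apply: ge0_le_integral => //; first by move=> x _; rewrite lee_fin powR_ge0.
    exact/measurable_EFinP.
  move=> x _; rewrite lee_fin ge0_ler_powR ?nnegrE ?(ltW p_gt0) //.
  exact: staircase_le_nat.
have : (J <= (2^-1 * fine J + 2 `^ (p - 1) * z)%:E)%E.
  apply: (@le_trans _ _ (\int[P]_x (Y x * N x `^ (p - 1))%:E)%E).
    apply: ge0_le_integral => //; first by move=> x _; rewrite lee_fin powR_ge0.
    - exact/measurable_EFinP.
    - apply/measurable_EFinP/measurable_funM => //.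
      exact: measurableT_comp (measurable_powR _) mN.
    - move=> x _; rewrite lee_fin -mulr_powRB1 ?ler_wpM2r ?powR_ge0 //.
      exact: staircase_le.
  rewrite integral_mul_staircase_level.
  apply: le_trans (integral_mul_powRB1_le P _ _ _ p1 mN mZ N0 Z0) _.
  by rewrite Zp -/J -{1}(fineK Jfin) -!EFinM -EFinD.
rewrite -(fineK Jfin) !lee_fin /= -(mulr_powRB1 (ler0n R 2) p_gt0); lra.
Qed.

Lemma powR_moment_le_of_level :
  (\int[P]_x (Y x `^ p)%:E <= (2 `^ p * (2 `^ p * z + 1))%:E)%E.
Proof.
apply: integral_powR_le_of_min (ltW p_gt0) _ _ _ => // M.
have mNp := measurableT_comp (measurable_powR p)
  (measurableT_comp (measurable_staircase M) mY).
apply: (@le_trans _ _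
  (\int[P]_x ((2 `^ p)%:E * ((staircase M (Y x) `^ p)%:E + 1)))%E).
  apply: ge0_le_integral => //.
  - by move=> x _; rewrite lee_fin powR_ge0.
  - apply/measurable_EFinP/(measurableT_comp (measurable_powR p)).
    exact: measurable_minr mY (measurable_cst _).
  - apply: emeasurable_funM; first exact: measurable_cst.
    by apply: emeasurable_funD => //; exact/measurable_EFinP.
  - move=> x _; rewrite -EFinD -EFinM lee_fin.
    rewrite powR_le_mul2D1 ?staircase_ge0 ?(ltW p_gt0) //.
    + by rewrite le_min Y0 ler0n.
    + exact: min_le_staircaseD1.
rewrite ge0_integralZl ?lee_fin ?powR_ge0 //; last 2 first.
- by apply: emeasurable_funD => //; exact/measurable_EFinP.
- by move=> x _; rewrite adde_ge0 // lee_fin powR_ge0.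
rewrite ge0_integralD //; last 2 first.
- by move=> x _; rewrite lee_fin powR_ge0.
- exact/measurable_EFinP.
rewrite integral_cst //= probability_setT mule1 EFinM.
rewrite lee_wpmul2l ?lee_fin ?powR_ge0 //.
by rewrite EFinD leeD2r // staircase_moment_le.
Qed.

End LevelSetDomination.

Section Martingale.
Context {d} {T : measurableType d} {R : realType} (P : probability T R).
Context {F : R -> set (set T)} {M : R -> T -> R}.
Hypotheses (hF : filtration F) (hM : martingale P F M).

Lemma martingale_measurable s : 0 <= s -> measurable_fun setT (M s).
Proof.
move=> s0 _ B mB; rewrite setTI; case: hM => adapted _ _.
exact: (hF.1 s s0).2 _ (adapted s s0 B mB).
Qed.

Lemma martingale_level_integral s t c : 0 <= s -> s <= t ->
  (\int[P]_(x in M s @^-1` `[c, +oo[) (M t x)%:E =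
   \int[P]_(x in M s @^-1` `[c, +oo[) (M s x)%:E)%E.
Proof.
move=> s0 st; case: hM => adapted _ mart.
by apply: mart => //; apply: adapted => //; exact: measurable_itv.
Qed.

Lemma martingale_powR_moment_le (p z s t : R) : 1 < p -> 0 <= s -> s <= t ->
  (forall u x, 0 <= M u x) -> (\int[P]_x (M t x `^ p)%:E = z%:E)%E ->
  (\int[P]_x (M s x `^ p)%:E <= (2 `^ p * (2 `^ p * z + 1))%:E)%E.
Proof.
move=> p1 s0 st M0 Mt_p; apply: (powR_moment_le_of_level P (M s) (M t)) => //.
- exact: martingale_measurable.
- exact: martingale_measurable (le_trans s0 st).
- by move=> c; exact: martingale_level_integral.
Qed.

End Martingale.

Lemma limf_esup_right_le {R : realType} (f : R -> \bar R) (a b : R) (C : \bar R) :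
  a < b -> (forall x, a < x < b -> (f x <= C)%E) -> (limf_esup f a^'+ <= C)%E.
Proof.
move=> ab fC; rewrite limf_esupE.
apply: (@le_trans _ _ (ereal_sup [set f x | x in [set x | a < x < b]])).
  apply: ereal_inf_lbound; exists [set x | a < x < b] => //.
  near=> x; apply/andP; split; near: x; [exact: nbhs_right_gt | exact: nbhs_right_lt].
by apply: ge_ereal_sup => _ [x xab <-]; exact: fC.
Unshelve. all: by end_near. Qed.

Lemma expR_mul_powR {R : realType} (p a y : R) :
  expR (p * y) = expR (p * a) * (expR (- a) * expR y) `^ p.
Proof. by rewrite -expRD -expRM -expRD; congr expR; ring. Qed.

Theorem lemma4p1 (R : realType) (d : measure_display) (T : measurableType d)
  (P : probability T R) (F : R -> set (set T)) (X : R -> T -> R) (r p t : R) :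
  filtration F ->
  martingale P F (fun s x => expR (- r * s) * expR (X s x)) ->
  1 < p -> 0 < t ->
  (\int[P]_x ((expR (- r * t) * expR (X t x)) `^ p)%:E < +oo)%E ->
  (limf_esup (fun eps : R => \int[P]_x (expR (p * X (eps ^+ 2) x))%:E)
             (0%R)^'+ < +oo)%E.
Proof.
move=> hF hS p1 t0 St_p.
pose S s x := expR (- r * s) * expR (X s x).
have S0 s x : 0 <= S s x by rewrite mulr_ge0 ?expR_ge0.
have [z St_pE] : exists z, (\int[P]_x (S t x `^ p)%:E = z%:E)%E.
  exists (fine (\int[P]_x (S t x `^ p)%:E)%E); rewrite fineK // ge0_fin_numE //.
  by apply: integral_ge0 => x _; rewrite lee_fin powR_ge0.
apply: (le_lt_trans _ (ltry (expR (`|p * r| * t) * (2 `^ p * (2 `^ p * z + 1))))).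
apply: (@limf_esup_right_le _ _ 0 (Num.min 1 t)); first by rewrite lt_min ltr01.
move=> eps /andP[eps0]; rewrite lt_min => /andP[eps1 eps_t].
have s0 : 0 <= eps ^+ 2 := sqr_ge0 eps.
have s_le_t : eps ^+ 2 <= t by rewrite expr2; nra.
under eq_integral do rewrite (expR_mul_powR _ (r * eps ^+ 2)) -mulNr EFinM.
rewrite ge0_integralZl ?lee_fin ?expR_ge0 //; last first.
  apply/measurable_EFinP.
  exact: measurableT_comp (measurable_powR p) (martingale_measurable P hF hS _ s0).
rewrite EFinM lee_pmul ?integral_ge0 ?lee_fin ?expR_ge0 //.
- rewrite ler_expR mulrA (le_trans (ler_norm _)) // normrM (ger0_norm s0).
  exact: ler_wpM2l.
- exact (martingale_powR_moment_le P hF hS _ _ _ _ p1 s0 s_le_t S0 St_pE).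
Qed.
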